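(* For all $x\ge 1$ (and $n\ge x$), the $(x,x)$ edge-addition process on $n$ vertices always results in an $(x,x)$ task-dependency graph.
   Context: A task-dependency graph is a finite directed acyclic graph (no loops, no multiple edges). A vertex is initial if it has in-degree $0$ and terminal if it has out-degree $0$ (an isolated vertex is both). An $(x,y)$ task-dependency graph has exactly $x$ initial and exactly $y$ terminal vertices. The $(x,y)$ edge-addition process on $n$ vertices: start with the empty graph on $\{1,\dots,n\}$ and repeatedly add, uniformly at random, an edge $(a,b)$ with $a<b$ not yet present; if an addition would cause fewer than $x$ initial vertices or fewer than $y$ terminal vertices, it is cancelled. The process halts if the graph after some edge addition is an $(x,y)$ task-dependency graph, or if no more edges can be added; the result is the final graph. *)

From mathcomp Require Import all_boot.
Set Implicit Arguments. Unset Strict Implicit. Unset Printing Implicit Defensive.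

(* A graph on vertex set {1..n} is encoded on 'I_n (vertex i <-> i+1) as a
   set of directed edges (a,b); the edge-addition process only ever adds edges
   with a < b, so the graphs are DAGs without loops or multiple edges. *)
Definition graph (n : nat) := {set 'I_n * 'I_n}.

Definition empty_graph (n : nat) : graph n := set0.

Definition initial_vertices n (G : graph n) : {set 'I_n} :=
  [set v | [forall u, (u, v) \notin G]].
Definition terminal_vertices n (G : graph n) : {set 'I_n} :=
  [set u | [forall v, (u, v) \notin G]].

Definition is_tdg (x y : nat) n (G : graph n) : Prop :=
  #|initial_vertices G| = x /\ #|terminal_vertices G| = y.

(* adding e to G is possible (a new edge (a,b), a<b) and not cancelled *)
Definition allowed (x y : nat) n (G : graph n) (e : 'I_n * 'I_n) : Prop :=
  [/\ (e.1 < e.2)%N, e \notin G,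
      (x <= #|initial_vertices (e |: G)|)%N &
      (y <= #|terminal_vertices (e |: G)|)%N].

(* [reach x y n k G]: some run of the (x,y) edge-addition process on n
   vertices, which has not halted yet, reaches G after k successful edge
   additions (cancelled additions leave the graph unchanged and are omitted). *)
Inductive reach (x y n : nat) : nat -> graph n -> Prop :=
| reach0 : reach x y 0 (empty_graph n)
| reachS k G e :
    reach x y k G ->
    ~ ((0 < k)%N /\ is_tdg x y G) ->   (* the process did not halt at G *)
    allowed x y G e ->
    reach x y k.+1 (e |: G).

Definition final_graph (x y n : nat) (G : graph n) : Prop :=
  exists k, reach x y k G /\
    (((0 < k)%N /\ is_tdg x y G) \/ (forall e, ~ allowed x y G e)).

From mathcomp Require Import all_boot.
From mathcomp Require Import zify.

(* Every added edge goes from a smaller to a larger vertex, and the process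
   never lets the number of initial or terminal vertices drop below x, so it
   suffices to show that a graph to which no edge can be added has at most x
   of each.  Suppose it has more than x initial vertices and let b be the
   largest one.  Each a < b is terminal, since otherwise adding (a, b) would be
   allowed; together with the last vertex this gives at least as many terminal
   as initial vertices.  Then adding (c, b) for another initial vertex c is
   allowed, a contradiction.  The bound on terminal vertices follows by
   reversing the graph (v |-> n-1-v, edges flipped), which swaps initial and
   terminal vertices. *)

Definition upward {n} (G : graph n) := forall e, e \in G -> e.1 < e.2.

Definition stuck x y {n} (G : graph n) := forall e, ~ allowed x y G e.

Section EdgeAddition.

Context {n : nat}.
Implicit Types (G : graph n) (e : 'I_n * 'I_n).

Lemma initial_verticesU1 G e :
  initial_vertices (e |: G) = initial_vertices G :\ e.2.
Proof.
case: e => a b; apply/setP => v; rewrite !inE /=.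
apply/forallP/andP => [noin | [vb /forallP noin] u].
  split; first by apply: contraTneq (noin a) => ->; rewrite !inE eqxx.
  by apply/forallP => u; move: (noin u); rewrite !inE negb_or => /andP[].
by rewrite !inE negb_or noin andbT; apply: contra vb => /eqP[_ ->].
Qed.

Lemma terminal_verticesU1 G e :
  terminal_vertices (e |: G) = terminal_vertices G :\ e.1.
Proof.
case: e => a b; apply/setP => v; rewrite !inE /=.
apply/forallP/andP => [noout | [va /forallP noout] w].
  split; first by apply: contraTneq (noout b) => ->; rewrite !inE eqxx.
  by apply/forallP => w; move: (noout w); rewrite !inE negb_or => /andP[].
by rewrite !inE negb_or noout andbT; apply: contra va => /eqP[-> _].
Qed.

Lemma initial_vertices0 : initial_vertices (empty_graph n) = setT.
Proof. by apply/setP => v; rewrite !inE; apply/forallP => u; rewrite inE. Qed.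

Lemma terminal_vertices0 : terminal_vertices (empty_graph n) = setT.
Proof. by apply/setP => v; rewrite !inE; apply/forallP => u; rewrite inE. Qed.

Lemma reach_upward {x y k G} : reach x y k G -> upward G.
Proof.
elim=> [|k' G' e _ upG _ [e_up _ _ _]] f; first by rewrite inE.
by rewrite in_setU1 => /orP[/eqP -> | /upG].
Qed.

Lemma reach_card_ge {x y k G} : x <= n -> y <= n -> reach x y k G ->
  x <= #|initial_vertices G| /\ y <= #|terminal_vertices G|.
Proof.
move=> xn yn; case=> [|k' G' e _ _ [_ _ xI yT]] //.
by rewrite initial_vertices0 terminal_vertices0 cardsT card_ord.
Qed.

Lemma upward_last_terminal G (v : 'I_n) :
  upward G -> v = n.-1 :> nat -> v \in terminal_vertices G.
Proof.
move=> upG vlast; rewrite inE; apply/forallP => w; apply/negP => /upG /=.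
by have := ltn_ord w; lia.
Qed.

Section StuckInitial.

Context {x y : nat} {G : graph n}.
Hypotheses (x_gt0 : 0 < x) (y_le_x : y <= x) (upG : upward G) (stuckG : stuck x y G).
Local Notation Iv := (initial_vertices G).
Local Notation Tv := (terminal_vertices G).

Lemma stuck_initial_le : y <= #|Tv| -> #|Iv| <= x.
Proof.
move=> yT; rewrite leqNgt; apply/negP => xI.
have [b0 b0I] : exists b0, b0 \in Iv by apply/set0Pn; rewrite -card_gt0; lia.
have [b bI b_max] : exists2 b : 'I_n, b \in Iv & forall c, c \in Iv -> c <= b.
  by case: (arg_maxnP (@nat_of_ord n) b0I) => b; exists b.
have cardI : #|Iv| = #|Iv :\ b|.+1 by rewrite (cardsD1 b) bI.
have below_b (c : 'I_n) : c \in Iv -> c != b -> c < b.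
  by move=> cI; rewrite ltn_neqAle b_max // andbT; apply: contra => /eqP/val_inj->.
have add_to_b (a : 'I_n) : a < b -> y <= #|Tv :\ a| -> False.
  move=> ab yTa; apply: (stuckG (a, b)); split => //=.
  - by move: bI; rewrite inE => /forallP.
  - by rewrite initial_verticesU1 -ltnS -cardI.
  - by rewrite terminal_verticesU1.
have below_b_terminal (a : 'I_n) : a < b -> a \in Tv.
  move=> ab; apply/negPn/negP => aT; apply: (add_to_b a ab).
  by rewrite (cardsD1 a) (negbTE aT) in yT.
have I_le_T : #|Iv| <= #|Tv|.
  have lastP : n.-1 < n by rewrite ltn_predL; apply: leq_ltn_trans (ltn_ord b).
  pose last := Ordinal lastP.
  have cardT : #|Tv| = #|Tv :\ last|.+1.
    by rewrite (cardsD1 last) upward_last_terminal.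
  have : #|Iv :\ b| <= #|Tv :\ last|.
    apply/subset_leq_card/subsetP => c; rewrite !in_setD1 => /andP[cb cI].
    have cb_lt := below_b c cI cb.
    rewrite below_b_terminal // andbT; apply: contraTneq cb_lt => ->.
    by have := ltn_ord b; rewrite /= -leqNgt; lia.
  lia.
have [c] : exists c, c \in Iv :\ b by apply/set0Pn; rewrite -card_gt0; lia.
rewrite in_setD1 => /andP[cb cI]; have cb_lt := below_b c cI cb.
apply: (add_to_b c cb_lt).
have cardT : #|Tv| = #|Tv :\ c|.+1 by rewrite (cardsD1 c) below_b_terminal.
by rewrite -ltnS -cardT; apply: leq_ltn_trans y_le_x (leq_trans xI I_le_T).
Qed.

End StuckInitial.

Definition rev_edge e : 'I_n * 'I_n := (rev_ord e.2, rev_ord e.1).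

Definition rev_graph G : graph n := rev_edge @^-1: G.

Lemma rev_edgeK : involutive rev_edge.
Proof. by case=> a b; rewrite /rev_edge /= !rev_ordK. Qed.

Lemma rev_edge_lt e : ((rev_edge e).1 < (rev_edge e).2) = (e.1 < e.2).
Proof. by case: e => a b /=; have := ltn_ord a; have := ltn_ord b; lia. Qed.

Lemma rev_graphU1 G e : rev_graph (e |: G) = rev_edge e |: rev_graph G.
Proof. by apply/setP => f; rewrite !inE (can2_eq rev_edgeK rev_edgeK). Qed.

Lemma rev_graphK : involutive rev_graph.
Proof. by move=> G; apply/setP => e; rewrite !inE rev_edgeK. Qed.

Lemma initial_rev_graph G :
  initial_vertices (rev_graph G) = @rev_ord n @^-1: terminal_vertices G.
Proof.
apply/setP => v; rewrite !inE.
apply/forallP/forallP => noin u.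
  by rewrite -(rev_ordK u); move: (noin (rev_ord u)); rewrite inE.
by rewrite inE; exact (noin (rev_ord u)).
Qed.

Lemma card_initial_rev_graph G :
  #|initial_vertices (rev_graph G)| = #|terminal_vertices G|.
Proof. by rewrite initial_rev_graph card_preimset //; apply: inv_inj rev_ordK. Qed.

Lemma card_terminal_rev_graph G :
  #|terminal_vertices (rev_graph G)| = #|initial_vertices G|.
Proof. by rewrite -{2}(rev_graphK G) card_initial_rev_graph. Qed.

Lemma upward_rev_graph {G} : upward G -> upward (rev_graph G).
Proof. by move=> upG e; rewrite inE => /upG; rewrite rev_edge_lt. Qed.

Lemma allowed_rev_graph x y G e :
  allowed x y G e -> allowed y x (rev_graph G) (rev_edge e).
Proof.
case=> e_up eG xI yT; split.
- by rewrite rev_edge_lt.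
- by rewrite inE rev_edgeK.
- by rewrite -rev_graphU1 card_initial_rev_graph.
- by rewrite -rev_graphU1 card_terminal_rev_graph.
Qed.

Lemma stuck_rev_graph {x y G} : stuck x y G -> stuck y x (rev_graph G).
Proof.
by move=> stuckG e /allowed_rev_graph; rewrite rev_graphK; apply: stuckG.
Qed.

Lemma stuck_terminal_le {x y G} : 0 < y -> x <= y -> upward G -> stuck x y G ->
  x <= #|initial_vertices G| -> #|terminal_vertices G| <= y.
Proof.
move=> y_gt0 xy upG stuckG xI.
have := stuck_initial_le y_gt0 xy (upward_rev_graph upG) (stuck_rev_graph stuckG).
by rewrite card_initial_rev_graph card_terminal_rev_graph; apply.
Qed.

End EdgeAddition.

Theorem mainTheorem10 (x n : nat) :
  (1 <= x)%N -> (x <= n)%N ->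
  forall G : graph n, final_graph x x G -> is_tdg x x G.
Proof.
move=> x_gt0 xn G [k [reachG [[_ tdgG] | stuckG]]] //.
have upG := reach_upward reachG.
have [xI xT] := reach_card_ge xn xn reachG.
split; apply/eqP; rewrite eqn_leq ?xI ?xT andbT.
- exact: (stuck_initial_le x_gt0 (leqnn x) upG stuckG xT).
- exact: (stuck_terminal_le x_gt0 (leqnn x) upG stuckG xI).
Qed.
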